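(* For every integer $n\ge 0$, \[ \sum_{k=0}^{n}(-4)^k\frac{\binom{n}{k}}{\binom{1+2k}{k}}\,k\,H_{1+2k} =\frac{2n\{H_{n}-2H_{1+2n}\}}{(4n^2-1)(2n-3)}+\frac{2n(8n^4+20n^3-2n^2-53n+8)}{(4n^2-1)^2(2n-3)^2}. \]
   Context: For an integer $m\ge 0$, $H_m$ denotes the $m$-th harmonic number: $H_0=0$ and $H_m=\sum_{j=1}^m \frac1j$ for $m\ge1$. $\binom{n}{k}$ is the usual binomial coefficient. *)

From HB Require Import structures.
From mathcomp Require Import all_boot all_order all_algebra.
Set Implicit Arguments. Unset Strict Implicit. Unset Printing Implicit Defensive.
Import Order.TTheory GRing.Theory Num.Theory.
Local Open Scope ring_scope.

Definition harmonic (m : nat) : rat := \sum_(1 <= j < m.+1) (j%:R)^-1.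

From HB Require Import structures.
From mathcomp Require Import all_boot all_order all_algebra.
From mathcomp Require Import ring zify.
Import Order.TTheory GRing.Theory Num.Theory.
Local Open Scope ring_scope.

(* Creative telescoping.  With t(n,k) = C(n,k) (-4)^k / C(2k+1,k), both sides
   satisfy, for n >= 1, the first-order recurrence
     S(n+1) - alpha(n) S(n) = rho(n),   alpha(n) = (n+1)(2n-3) / (n(2n+3)).
   For the sum this follows by telescoping against the certificate [harm_cert];
   the increment H_(2k+3) - H_(2k+1) of the harmonic factor leaves over the sum
   of t(n+1,k)(4k^2-3k-1), which, like the plain sum of t(m,k) = -1/(4m^2-1),
   is itself evaluated by telescoping.  For the closed form the recurrence is a
   rational-function identity; the cases n = 0 and n = 1 are computed. *)

Section NatBinomialRing.
Variable R : pzRingType.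

Lemma natr_mul_bin_down (n k : nat) :
  'C(n.+1, k)%:R * (n.+1%:R - k%:R) = n.+1%:R * 'C(n, k)%:R :> R.
Proof.
case: (leqP k n.+1) => hk; first by rewrite -natrB // -!natrM mulnC -mul_bin_down.
by rewrite !bin_small ?mul0r ?mulr0 //; lia.
Qed.

Lemma natr_mul_bin_diag (n k : nat) :
  'C(n.+1, k.+1)%:R * k.+1%:R = n.+1%:R * 'C(n, k)%:R :> R.
Proof. by rewrite -!natrM mulnC -(mul_bin_diag n.+1 k). Qed.

Lemma natr_mul_bin_left (n k : nat) :
  'C(n, k.+1)%:R * k.+1%:R = (n%:R - k%:R) * 'C(n, k)%:R :> R.
Proof.
case: (leqP k n) => hk; first by rewrite -natrB // -!natrM mulnC mul_bin_left.
by rewrite !bin_small ?mul0r ?mulr0 //; lia.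
Qed.

End NatBinomialRing.

Section NatNonzero.
Variable R : numDomainType.

Lemma natr_double_sub_odd_neq0 (m j : nat) : 2 * m%:R - (2 * j + 1)%:R != 0 :> R.
Proof. by rewrite subr_eq0 -natrM eqr_nat; lia. Qed.

Lemma natr_affine_neq0 (a b m : nat) : a%:R * m%:R + b.+1%:R != 0 :> R.
Proof. by rewrite -natrM -natrD pnatr_eq0 addnS. Qed.

End NatNonzero.

(* Lets [ring]/[field] use a hypothesis [a = b], given the multiplier [c]. *)
Lemma eq_by_lincomb (R : comPzRingType) (x y c a b : R) :
  a = b -> x - y = c * (a - b) -> x = y.
Proof. by move=> -> h; apply/eqP; rewrite -subr_eq0 h subrr mulr0. Qed.

Lemma sumr_nat_recr0 (V : zmodType) (F : nat -> V) (n : nat) :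
  F n = 0 -> \sum_(0 <= k < n.+1) F k = \sum_(0 <= k < n) F k.
Proof. by move=> Fn; rewrite big_nat_recr //= Fn addr0. Qed.

Lemma sumr_telescope0 {V : zmodType} {F G : nat -> V} (n : nat) :
  (forall k, F k = G k.+1 - G k) -> G 0%N = 0 -> G n = 0 ->
  \sum_(0 <= k < n) F k = 0.
Proof.
move=> FG G0 Gn.
by rewrite (@telescope_sumr_eq _ 0 n G) ?Gn ?G0 ?subrr // => k _; apply: FG.
Qed.

Lemma mul_bin_odd_succ (k : nat) :
  ('C(1 + 2 * k.+1, k.+1) * k.+2 = 2 * (2 * k + 3) * 'C(1 + 2 * k, k))%N.
Proof.
have e2 : (1 + 2 * k.+1 = (2 * k + 2).+1)%N by lia.
have d1 := mul_bin_diag (2 * k + 2).+1 k.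
have d2 := mul_bin_diag (2 * k + 2) k.
have l2 := mul_bin_left (2 * k + 2) k.
rewrite (_ : (2 * k + 2).-1 = 1 + 2 * k)%N in d2; last by lia.
rewrite /= in d1.
apply/eqP; rewrite -(eqn_pmul2l (ltn0Sn k)) e2; apply/eqP.
move: d1 d2 l2; rewrite (_ : (2 * k + 2 - k = k.+2)%N); last by lia.
nia.
Qed.

Definition weight (k : nat) : rat := (-4) ^+ k / 'C(1 + 2 * k, k)%:R.

Definition term (n k : nat) : rat := 'C(n, k)%:R * weight k.

Lemma weightS (k : nat) :
  weight k.+1 * (2 * k%:R + 3) = -2 * (k%:R + 2) * weight k.
Proof.
have c_neq0 (j : nat) : 'C(1 + 2 * j, j)%:R != 0 :> rat.
  by rewrite pnatr_eq0 -lt0n bin_gt0; lia.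
have ebin : 'C(1 + 2 * k.+1, k.+1)%:R * (k%:R + 2)
            = 2 * (2 * k%:R + 3) * 'C(1 + 2 * k, k)%:R :> rat.
  by rewrite -(natrD _ k 2) -(natrM _ 2 k) -natrD -!natrM addn2 mul_bin_odd_succ.
rewrite /weight exprS.
apply: (@eq_by_lincomb _ _ _
  (2 * (-4) ^+ k / ('C(1 + 2 * k.+1, k.+1)%:R * 'C(1 + 2 * k, k)%:R)) _ _ ebin).
by field; rewrite !c_neq0.
Qed.

Lemma term_small (n k : nat) : (n < k)%N -> term n k = 0.
Proof. by move=> nk; rewrite /term bin_small // mul0r. Qed.

Lemma term0 (n : nat) : term n 0 = 1.
Proof. by rewrite /term /weight !bin0 expr0 divr1. Qed.

Lemma four_sqr_sub1_neq0 (m : nat) : 4 * m%:R ^+ 2 - 1 != 0 :> rat.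
Proof.
have -> : 4 * m%:R ^+ 2 - 1 = (2 * m%:R - (2 * 0 + 1)%:R) * (2 * m%:R + 1) :> rat by ring.
by rewrite mulf_neq0 ?natr_double_sub_odd_neq0 ?(natr_affine_neq0 _ 2 0).
Qed.

Definition term_cert (m k : nat) : rat :=
  - term m.+1 k * k%:R * (2 * k%:R + 1) / ((m%:R + 1) * (2 * m%:R + 3)).

Lemma term_telescoping (m k : nat) :
  term m.+1 k - (2 * m%:R - 1) / (2 * m%:R + 3) * term m k
  = term_cert m k.+1 - term_cert m k.
Proof.
have m1_neq0 : m%:R + 1 != 0 :> rat by rewrite natr1 pnatr_eq0.
have m3_neq0 : 2 * m%:R + 3 != 0 :> rat := natr_affine_neq0 _ 2 2 m.
have -> : term_cert m k.+1 = - ('C(m.+1, k.+1)%:R * k.+1%:R)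
    * (weight k.+1 * (2 * k%:R + 3)) / ((m%:R + 1) * (2 * m%:R + 3)).
  by rewrite /term_cert /term natr1; ring.
rewrite (natr_mul_bin_diag rat m k) (weightS k) /term_cert /term.
apply: (@eq_by_lincomb _ _ _ (weight k * (2 * m%:R + 2 * k%:R + 3)
  / ((m%:R + 1) * (2 * m%:R + 3))) _ _ (natr_mul_bin_down rat m k)).
by field; rewrite m1_neq0 m3_neq0.
Qed.

Lemma sum_term (m : nat) : \sum_(0 <= k < m.+1) term m k = -1 / (4 * m%:R ^+ 2 - 1).
Proof.
elim: m => [|m IHm].
  by rewrite big_nat1 term0; field; apply: four_sqr_sub1_neq0 0.
have m3_neq0 : 2 * m%:R + 3 != 0 :> rat := natr_affine_neq0 _ 2 2 m.
have cert0 : term_cert m 0 = 0 by rewrite /term_cert mulr0n mulr0 !mul0r.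
have cert_end : term_cert m m.+2 = 0 by rewrite /term_cert term_small // oppr0 !mul0r.
have := sumr_telescope0 m.+2 (term_telescoping m) cert0 cert_end.
rewrite sumrB -mulr_sumr [X in _ * X]sumr_nat_recr0 ?term_small // IHm.
move/eqP; rewrite subr_eq0 => /eqP ->.
have := four_sqr_sub1_neq0 m.+1; rewrite -(natr1 m) => h1.
by field; rewrite h1 four_sqr_sub1_neq0 m3_neq0.
Qed.

Definition quad_cert (m j : nat) : rat :=
  term m j * j%:R * (2 * j%:R + 1) * (30 * m%:R - 31 - 4 * j%:R * (2 * m%:R - 3))
    / ((2 * m%:R - 5) * (2 * m%:R - 3)).

Lemma quad_telescoping (m j : nat) :
  term m j * (4 * j%:R ^+ 2 - 3 * j%:R - 1)
  = (84 * m%:R ^+ 2 - 60 * m%:R - 15) / ((2 * m%:R - 5) * (2 * m%:R - 3)) * term m j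
    + (quad_cert m j.+1 - quad_cert m j).
Proof.
have m5_neq0 : 2 * m%:R - 5 != 0 :> rat := natr_double_sub_odd_neq0 _ m 2.
have m3_neq0 : 2 * m%:R - 3 != 0 :> rat := natr_double_sub_odd_neq0 _ m 1.
have -> : quad_cert m j.+1 = ('C(m, j.+1)%:R * j.+1%:R) * (weight j.+1 * (2 * j%:R + 3))
    * (30 * m%:R - 31 - 4 * (j%:R + 1) * (2 * m%:R - 3))
    / ((2 * m%:R - 5) * (2 * m%:R - 3)).
  by rewrite /quad_cert /term -(natr1 j); ring.
rewrite (natr_mul_bin_left rat m j) (weightS j) /quad_cert /term.
by field; rewrite m5_neq0 m3_neq0.
Qed.

Lemma sum_term_quad (m : nat) :
  \sum_(0 <= j < m.+1) term m j * (4 * j%:R ^+ 2 - 3 * j%:R - 1)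
  = - (84 * m%:R ^+ 2 - 60 * m%:R - 15)
      / ((2 * m%:R - 5) * (2 * m%:R - 3) * (4 * m%:R ^+ 2 - 1)).
Proof.
under eq_bigr do rewrite quad_telescoping.
rewrite big_split /= -mulr_sumr sum_term telescope_sumr //.
rewrite /quad_cert term_small // mulr0n !mulr0 !mul0r subrr addr0.
have m5_neq0 : 2 * m%:R - 5 != 0 :> rat := natr_double_sub_odd_neq0 _ m 2.
have m3_neq0 : 2 * m%:R - 3 != 0 :> rat := natr_double_sub_odd_neq0 _ m 1.
by field; rewrite m5_neq0 m3_neq0 four_sqr_sub1_neq0.
Qed.

Lemma harmonicS (m : nat) : harmonic m.+1 = harmonic m + m.+1%:R^-1.
Proof. by rewrite /harmonic big_nat_recr. Qed.

Lemma harmonic_oddS (k : nat) :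
  harmonic (1 + 2 * k.+1)
  = harmonic (1 + 2 * k) + (2 * k%:R + 2)^-1 + (2 * k%:R + 3)^-1.
Proof.
rewrite (_ : 1 + 2 * k.+1 = (1 + 2 * k).+2)%N; last by lia.
rewrite 2!harmonicS (_ : (1 + 2 * k).+1 = 2 * k + 2)%N; last by lia.
rewrite (_ : (2 * k + 2).+1 = 2 * k + 3)%N; last by lia.
by rewrite natrD natrM natrD natrM.
Qed.

Definition bin_harmonic_sum (n : nat) : rat :=
  \sum_(0 <= k < n.+1) term n k * k%:R * harmonic (1 + 2 * k).

Definition bin_harmonic_closed (n : nat) : rat :=
  (2 * n%:R * (harmonic n - 2 * harmonic (1 + 2 * n)%N))
      / ((4 * n%:R ^+ 2 - 1) * (2 * n%:R - 3))
    + (2 * n%:R * (8 * n%:R ^+ 4 + 20 * n%:R ^+ 3 - 2 * n%:R ^+ 2 - 53 * n%:R + 8))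
      / ((4 * n%:R ^+ 2 - 1) ^+ 2 * (2 * n%:R - 3) ^+ 2).

Definition alpha (n : nat) : rat :=
  (n%:R + 1) * (2 * n%:R - 3) / (n%:R * (2 * n%:R + 3)).

Definition rho (n : nat) : rat :=
  (1 + \sum_(0 <= j < n.+2) term n.+1 j * (4 * j%:R ^+ 2 - 3 * j%:R - 1))
    / (2 * n%:R * (2 * n%:R + 3)).

Definition harm_cert (n k : nat) : rat :=
  - term n.+1 k * k%:R * (k%:R - 1) * (2 * k%:R + 1) / (n%:R * (2 * n%:R + 3)).

Lemma weighted_term_telescoping (n k : nat) : n != 0%N ->
  term n.+1 k * k%:R - alpha n * (term n k * k%:R) = harm_cert n k.+1 - harm_cert n k.
Proof.
move=> n_neq0; rewrite -(pnatr_eq0 rat) in n_neq0.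
have n3_neq0 : 2 * n%:R + 3 != 0 :> rat := natr_affine_neq0 _ 2 2 n.
have -> : harm_cert n k.+1
    = - ('C(n.+1, k.+1)%:R * k.+1%:R) * (weight k.+1 * (2 * k%:R + 3)) * k%:R
        / (n%:R * (2 * n%:R + 3)).
  by rewrite /harm_cert /term -(natr1 k); ring.
rewrite (natr_mul_bin_diag rat n k) (weightS k) /harm_cert /term /alpha.
apply: (@eq_by_lincomb _ _ _ (weight k * k%:R * (2 * n%:R + 2 * k%:R + 1)
  / (n%:R * (2 * n%:R + 3))) _ _ (natr_mul_bin_down rat n k)).
by field; rewrite n_neq0 n3_neq0.
Qed.

Lemma bin_harmonic_summand_telescoping (n k : nat) : n != 0%N ->
  term n.+1 k * k%:R * harmonic (1 + 2 * k)
    - alpha n * (term n k * k%:R * harmonic (1 + 2 * k))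
  = (harm_cert n k.+1 * harmonic (1 + 2 * k.+1) - harm_cert n k * harmonic (1 + 2 * k))
    + term n.+1 k.+1 * (4 * k.+1%:R ^+ 2 - 3 * k.+1%:R - 1) / (2 * n%:R * (2 * n%:R + 3)).
Proof.
move=> n_neq0.
have cert_harm_step : term n.+1 k.+1 * (4 * k.+1%:R ^+ 2 - 3 * k.+1%:R - 1)
      / (2 * n%:R * (2 * n%:R + 3))
    = - harm_cert n k.+1 * ((2 * k%:R + 2)^-1 + (2 * k%:R + 3)^-1).
  have n0_neq0 : n%:R != 0 :> rat by rewrite pnatr_eq0.
  have n3_neq0 : 2 * n%:R + 3 != 0 :> rat := natr_affine_neq0 _ 2 2 n.
  have k2_neq0 : 2 * k%:R + 2 != 0 :> rat := natr_affine_neq0 _ 2 1 k.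
  have k3_neq0 : 2 * k%:R + 3 != 0 :> rat := natr_affine_neq0 _ 2 2 k.
  rewrite /harm_cert -(natr1 k).
  by field; rewrite n0_neq0 n3_neq0 k2_neq0 k3_neq0.
rewrite harmonic_oddS cert_harm_step.
apply: (@eq_by_lincomb _ _ _ (harmonic (1 + 2 * k)) _ _
  (weighted_term_telescoping n k n_neq0)).
ring.
Qed.

Lemma bin_harmonic_sum_rec (n : nat) : n != 0%N ->
  bin_harmonic_sum n.+1 - alpha n * bin_harmonic_sum n = rho n.
Proof.
move=> n_neq0.
have sum_ext : bin_harmonic_sum n
    = \sum_(0 <= k < n.+2) term n k * k%:R * harmonic (1 + 2 * k).
  by rewrite /bin_harmonic_sum [RHS]sumr_nat_recr0 // term_small // !mul0r.
rewrite sum_ext /bin_harmonic_sum mulr_sumr -sumrB.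
under eq_bigr do rewrite bin_harmonic_summand_telescoping //.
rewrite big_split /= telescope_sumr //.
have cert0 : harm_cert n 0 = 0 by rewrite /harm_cert mulr0n mulr0 !mul0r.
have cert_end : harm_cert n n.+2 = 0 by rewrite /harm_cert term_small // oppr0 !mul0r.
rewrite cert0 cert_end !mul0r subrr add0r.
rewrite sumr_nat_recr0; last by rewrite term_small // !mul0r.
by rewrite -mulr_suml /rho [in RHS]big_nat_recl // term0; ring.
Qed.

Lemma bin_harmonic_closed_rec (n : nat) : n != 0%N ->
  bin_harmonic_closed n.+1 - alpha n * bin_harmonic_closed n = rho n.
Proof.
move=> n_neq0; rewrite -(pnatr_eq0 rat) in n_neq0.
have sq_succ_neq0 : 4 * (n%:R + 1) ^+ 2 - 1 != 0 :> rat.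
  by rewrite natr1 four_sqr_sub1_neq0.
have succ3_neq0 : 2 * n.+1%:R - 3 != 0 :> rat := natr_double_sub_odd_neq0 _ n.+1 1.
have succ5_neq0 : 2 * n.+1%:R - 5 != 0 :> rat := natr_double_sub_odd_neq0 _ n.+1 2.
rewrite -(natr1 n) in succ3_neq0 succ5_neq0.
have n2_neq0 : 2 * n%:R + 2 != 0 :> rat := natr_affine_neq0 _ 2 1 n.
have n3_neq0 : 2 * n%:R + 3 != 0 :> rat := natr_affine_neq0 _ 2 2 n.
have n1_neq0 : n%:R + 1 != 0 :> rat by rewrite natr1 pnatr_eq0.
rewrite /rho sum_term_quad /bin_harmonic_closed /alpha harmonic_oddS harmonicS -(natr1 n).
move: (harmonic n) (harmonic (1 + 2 * n)) => h1 h2.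
by field; rewrite n3_neq0 n_neq0 sq_succ_neq0 succ3_neq0 succ5_neq0
  four_sqr_sub1_neq0 n2_neq0 n1_neq0.
Qed.

Lemma bin_harmonic_sumE (n : nat) : bin_harmonic_sum n = bin_harmonic_closed n.
Proof.
elim: n => [|[|n] IHn].
- by rewrite /bin_harmonic_sum /bin_harmonic_closed big_nat1 !mulr0 !mul0r addr0.
- apply/eqP.
  by rewrite /bin_harmonic_sum /bin_harmonic_closed /term /weight /harmonic unlock.
- apply: (addIr (- (alpha n.+1 * bin_harmonic_sum n.+1))).
  by rewrite bin_harmonic_sum_rec // IHn bin_harmonic_closed_rec.
Qed.

Theorem theorem5 (n : nat) :
  \sum_(0 <= k < n.+1)
     (-4 : rat) ^+ k * ('C(n, k)%:R / 'C(1 + 2 * k, k)%:R) * k%:R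
       * harmonic (1 + 2 * k)%N
  = (2 * n%:R * (harmonic n - 2 * harmonic (1 + 2 * n)%N))
      / ((4 * n%:R ^+ 2 - 1) * (2 * n%:R - 3))
    + (2 * n%:R * (8 * n%:R ^+ 4 + 20 * n%:R ^+ 3 - 2 * n%:R ^+ 2 - 53 * n%:R + 8))
      / ((4 * n%:R ^+ 2 - 1) ^+ 2 * (2 * n%:R - 3) ^+ 2).
Proof.
rewrite -[RHS]/(bin_harmonic_closed n) -bin_harmonic_sumE.
by apply: eq_bigr => k _; rewrite /term /weight mulrCA.
Qed.
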